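(* There exist two tDCWs $\mathcal{D}_1,\mathcal{D}_2$ with $L(\mathcal{D}_1)=L(\mathcal{D}_2)$ that are both nice and minimal (no tDCW recognizing the same language has fewer states) and that are not isomorphic. Likewise, there exist two tDBWs recognizing the same language, both nice and minimal among tDBWs for that language, that are not isomorphic.
   Context: A tNCW is $\mathcal{A}=\langle\Sigma,Q,q_0,\delta,\alpha\rangle$: finite alphabet $\Sigma$, finite state set $Q$, initial state $q_0$, transition function $\delta:Q\times\Sigma\to 2^Q\setminus\{\emptyset\}$ with transition relation $\Delta=\{\langle q,\sigma,s\rangle:s\in\delta(q,\sigma)\}$, and $\alpha\subseteq\Delta$; its size is $|Q|$. $\alpha$-transitions are those in $\alpha$, $\bar\alpha$-transitions those in $\Delta\setminus\alpha$; $\delta^{\alpha}(q,\sigma)$, $\delta^{\bar\alpha}(q,\sigma)$ denote the $\sigma$-successors via $\alpha$-, resp. $\bar\alpha$-transitions. A run on $w=\sigma_1\sigma_2\cdots$ is $r_0r_1\cdots$ with $r_0=q_0$, $r_{i+1}\in\delta(r_i,\sigma_{i+1})$; it is accepting (co-Büchi) iff it traverses $\alpha$-transitions only finitely often. A tDCW is a tNCW with $|\delta(q,\sigma)|=1$ for all $q,\sigma$. A tDBW has the same syntax as a tDCW but a run is accepting iff it traverses $\alpha$-transitions infinitely often. $\mathcal{A}^q$ is $\mathcal{A}$ with initial state $q$; $q\sim s$ iff $L(\mathcal{A}^q)=L(\mathcal{A}^s)$. GFG: there is $f:\Sigma^*\to Q$ with $f(\epsilon)=q_0$, $\langle f(u),\sigma,f(u\sigma)\rangle\in\Delta$,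 and $f$'s run on every accepted word accepting; $q$ is GFG if $\mathcal{A}^q$ is. Nice: all states reachable and GFG, semantically deterministic (all $\sigma$-successors of a state pairwise $\sim$), safe deterministic ($|\delta^{\bar\alpha}(q,\sigma)|\le1$), and normal (a path of $\bar\alpha$-transitions from $q$ to $s$ implies one from $s$ to $q$); these notions are applied to tDBWs with the same structural meaning. For automata $\mathcal{A},\mathcal{B}$ with state sets $Q_\mathcal{A},Q_\mathcal{B}$, they are isomorphic if there is a bijection $\kappa:Q_\mathcal{A}\to Q_\mathcal{B}$ such that for all $q,q'\in Q_\mathcal{A}$ and $\sigma$: $q'\in\delta^{\bar\alpha}_\mathcal{A}(q,\sigma)$ iff $\kappa(q')\in\delta^{\bar\alpha}_\mathcal{B}(\kappa(q),\sigma)$, and $q'\in\delta^{\alpha}_\mathcal{A}(q,\sigma)$ iff $\kappa(q')\in\delta^{\alpha}_\mathcal{B}(\kappa(q),\sigma)$. *)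

From mathcomp Require Import all_boot.
Set Implicit Arguments. Unset Strict Implicit. Unset Printing Implicit Defensive.

(* The acceptance set is given as a boolean predicate on triples; the
   alpha-transitions are those triples of Delta on which it holds
   (so alpha is effectively intersected with Delta). *)
Record tNW (Sigma : finType) := TNW {
  st : finType;
  q0 : st;
  delta : st -> Sigma -> {set st};
  alpha : st -> Sigma -> st -> bool }.

Arguments q0 {Sigma} t.
Arguments delta {Sigma} t q s.
Arguments alpha {Sigma} t q s q'.

Inductive acc_cond := CoBuchi | Buchi.

Section Automata.
Variable Sigma : finType.
Implicit Types (A B : tNW Sigma) (c : acc_cond).

Definition wf_tNW A := forall q s, delta A q s != set0.

Definition is_alpha A q (s : Sigma) q' := (q' \in delta A q s) && alpha A q s q'.
Definition delta_a A q (s : Sigma) : {set st A} := [set q' in delta A q s | alpha A q s q'].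
Definition delta_na A q (s : Sigma) : {set st A} := [set q' in delta A q s | ~~ alpha A q s q'].

Definition word := nat -> Sigma.

(* run r_0 r_1 ... on w = sigma_1 sigma_2 ... ; here w i = sigma_{i+1} *)
Definition run_from A (q : st A) (w : word) (r : nat -> st A) :=
  r 0 = q /\ forall i, r i.+1 \in delta A (r i) (w i).

Definition acc_run c A (w : word) (r : nat -> st A) :=
  match c with
  | CoBuchi => exists N, forall i, N <= i -> ~~ is_alpha (r i) (w i) (r i.+1)
  | Buchi => forall N, exists i, N <= i /\ is_alpha (r i) (w i) (r i.+1)
  end.

Definition lang_from c A (q : st A) (w : word) :=
  exists r, run_from q w r /\ acc_run c w r.
Definition lang c A (w : word) := lang_from c (q0 A) w.

Definition equiv_st c A (q s : st A) := forall w, lang_from c q w <-> lang_from c s w.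

Definition prefix (w : word) (i : nat) : seq Sigma := [seq w j | j <- iota 0 i].

Definition GFG_from c A (q : st A) :=
  exists f : seq Sigma -> st A,
    f [::] = q /\
    (forall u s, f (rcons u s) \in delta A (f u) s) /\
    (forall w, lang_from c q w -> acc_run c w (fun i => f (prefix w i))).

Definition deltaS A (S : {set st A}) (u : seq Sigma) : {set st A} :=
  foldl (fun (S' : {set st A}) s => \bigcup_(q in S') delta A q s) S u.

Definition reachable A (q : st A) := exists u, q \in deltaS [set q0 A] u.

Definition sem_det c A :=
  forall (q : st A) s q1 q2, q1 \in delta A q s -> q2 \in delta A q s -> equiv_st c q1 q2.

Definition safe_det A := forall (q : st A) s, #|delta_na q s| <= 1.

Definition na_edge A : rel (st A) := fun q q' => [exists s, q' \in delta_na q s].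

Definition normal A := forall q q', connect (@na_edge A) q q' -> connect (@na_edge A) q' q.

Definition nice c A :=
  (forall q : st A, reachable q) /\ (forall q : st A, GFG_from c q) /\
  sem_det c A /\ safe_det A /\ normal A.

Definition deterministic A := forall q s, #|delta A q s| = 1.

Definition same_lang c A B := forall w, lang c A w <-> lang c B w.

Definition minimal_det c A :=
  deterministic A /\
  forall B : tNW Sigma, deterministic B -> same_lang c B A -> #|st A| <= #|st B|.

Definition isomorphic A B :=
  exists kappa : st A -> st B, bijective kappa /\
    forall (q q' : st A) s,
      (q' \in delta_na q s) = (kappa q' \in delta_na (kappa q) s) /\
      (q' \in delta_a q s) = (kappa q' \in delta_a (kappa q) s).

End Automata.

From Pilot Require Import Defs.
From mathcomp Require Import all_boot.
Set Implicit Arguments. Unset Strict Implicit. Unset Printing Implicit Defensive.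

(* Over the letters [a], [b], [#] (encoded as [Some false], [Some true],
   [None]) take two states remembering the last letter of {a, b} read, and
   let a transition be in alpha iff it reads [#] or changes the state.
   Reading [#] either sends the automaton to a fixed state or leaves it in
   place.  The two choices give non-isomorphic automata, but since a
   [#]-transition is in alpha anyway, the alpha-status of the transition
   after it never matters: along every word, alpha at step [i+1] forces a
   [#] or a change of letter at [i], which in turn forces alpha at step [i]
   or [i+1].  So both recognize "eventually constant over {a, b}"
   (co-Buechi), resp. its complement (Buechi).  One state does not suffice:
   a single state accepting [a^w] and [b^w] also accepts [(ab)^w]
   (co-Buechi), and one accepting [(ab)^w] also accepts [a^w] or [b^w]
   (Buechi). *)

Definition acc_seq (c : acc_cond) (a : nat -> bool) : Prop :=
  match c with
  | CoBuchi => exists N, forall i, N <= i -> ~~ a i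
  | Buchi => forall N, exists i, N <= i /\ a i
  end.

Lemma acc_runE (Sigma : finType) c (A : tNW Sigma) w (r : nat -> st A) :
  acc_run c w r = acc_seq c (fun i => is_alpha (r i) (w i) (r i.+1)).
Proof. by []. Qed.

Lemma acc_seq_ext c (a a' : nat -> bool) : a =1 a' -> acc_seq c a <-> acc_seq c a'.
Proof.
move=> e; case: c => /=; split.
- by case=> N aN; exists N => i /aN; rewrite e.
- by case=> N aN; exists N => i /aN; rewrite e.
- by move=> aN N; have [i] := aN N; rewrite e; exists i.
- by move=> aN N; have [i] := aN N; rewrite -e; exists i.
Qed.

Lemma acc_seq_CoBuchi_cst (b : bool) : acc_seq CoBuchi (fun=> b) <-> ~~ b.
Proof. by case: b; split=> //; [case=> N /(_ N (leqnn N)) | exists 0]. Qed.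

Lemma acc_seq_Buchi_cst (b : bool) : acc_seq Buchi (fun=> b) <-> b.
Proof. by case: b; split=> //; [move=> _ N; exists N | case/(_ 0)=> i []]. Qed.

Lemma acc_seq_shift c (a f : nat -> bool) :
  (forall i, a i.+1 -> f i) -> (forall i, f i -> a i || a i.+1) ->
  acc_seq c a <-> acc_seq c f.
Proof.
move=> af fa; case: c => /=; split.
- case=> N aN; exists N => i le_Ni; apply/negP => /fa.
  by rewrite (negbTE (aN _ le_Ni)) (negbTE (aN _ (leqW le_Ni))).
- case=> N fN; exists N.+1 => -[//|i] le_Ni; apply/negP => /af.
  by rewrite (negbTE (fN _ le_Ni)).
- move=> aN N; have [[|i] [//= le_Ni /af fi]] := aN N.+1.
  by exists i.
- move=> fN N; have [i [le_Ni /fa /orP[ai|ai]]] := fN N.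
  + by exists i.
  + by exists i.+1; rewrite leqW.
Qed.

Lemma prefixS (Sigma : finType) (w : word Sigma) i :
  Defs.prefix w i.+1 = rcons (Defs.prefix w i) (w i).
Proof. by rewrite /Defs.prefix -addn1 iotaD map_cat add0n cats1. Qed.

Section Deterministic.
Variables (Sigma : finType) (A : tNW Sigma).
Hypothesis detA : deterministic A.

Lemma safe_det_of_det : safe_det A.
Proof.
move=> q s; rewrite -(detA q s) /delta_na setIdE.
exact/subset_leq_card/subsetIl.
Qed.

Lemma sem_det_of_det c : sem_det c A.
Proof.
move=> q s q1 q2; have /eqP/cards1P[x ->] := detA q s.
by rewrite !inE => /eqP-> /eqP-> w; split.
Qed.

Lemma lang_one_state c : #|st A| <= 1 ->
  forall w, lang c A w <-> acc_seq c (fun i => alpha A (q0 A) (w i) (q0 A)).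
Proof.
move=> /fintype_le1P A1 w; have {}A1 (q : st A) : q = q0 A by exact: A1.
have loop s : q0 A \in delta A (q0 A) s.
  by have /eqP/cards1P[x ->] := detA (q0 A) s; rewrite -(A1 x) set11.
have alpha0 s : is_alpha (q0 A) s (q0 A) = alpha A (q0 A) s (q0 A).
  by rewrite /is_alpha loop.
split.
- case=> r [_]; rewrite acc_runE; apply: (acc_seq_ext _ _).1 => i.
  by rewrite (A1 (r i)) (A1 (r i.+1)) alpha0.
- move=> acc0; exists (fun=> q0 A); split; first by split.
  by rewrite acc_runE; apply: (acc_seq_ext _ _).2 acc0 => i; rewrite alpha0.
Qed.

End Deterministic.

Lemma normal_of_na_loops (Sigma : finType) (A : tNW Sigma) :
  (forall q q' : st A, na_edge q q' -> q' = q) -> normal A.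
Proof.
move=> loops; have sym_na : symmetric (@na_edge _ A).
  by move=> q q'; apply/idP/idP => /[dup] /loops ->.
by move=> q q'; rewrite sym_connect_sym.
Qed.

Section DetAutomaton.
Variables (Sigma Q : finType) (init : Q) (next : Q -> Sigma -> Q).
Variables (acc : Q -> Sigma -> Q -> bool).

Definition dtNW : tNW Sigma := @TNW Sigma Q init (fun q s => [set next q s]) acc.

Definition dtraj (q : Q) (w : word Sigma) i := foldl next q (Defs.prefix w i).

Lemma dtrajS q w i : dtraj q w i.+1 = next (dtraj q w i) (w i).
Proof. by rewrite /dtraj prefixS foldl_rcons. Qed.

Lemma is_alpha_dtNW q s : @is_alpha _ dtNW q s (next q s) = acc q s (next q s).
Proof. by rewrite /is_alpha set11. Qed.

Lemma deterministic_dtNW : deterministic dtNW.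
Proof. by move=> q s; rewrite cards1. Qed.

Lemma lang_from_dtNW c q w : @lang_from _ c dtNW q w <-> @acc_run _ c dtNW w (dtraj q w).
Proof.
split=> [[r [[r0 rS] acc_r]] | acc_traj].
- have r_traj : r =1 dtraj q w.
    by elim=> [|i IH] //; move: (rS i); rewrite inE IH dtrajS => /eqP.
  move: acc_r; rewrite !acc_runE; apply: (acc_seq_ext _ _).1 => i.
  by rewrite !r_traj.
- by exists (dtraj q w); split=> //; split=> // i; rewrite dtrajS inE.
Qed.

Lemma GFG_from_dtNW c q : @GFG_from _ c dtNW q.
Proof.
exists (foldl next q); split=> //; split.
- by move=> u s; rewrite foldl_rcons inE.
- by move=> w /lang_from_dtNW.
Qed.

End DetAutomaton.

Definition ex_next (reset : bool) (q : bool) (s : option bool) : bool :=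
  if s is Some b then b else if reset then false else q.

Definition ex_alpha (q : bool) (s : option bool) (q' : bool) : bool :=
  (s == None) || (q != q').

Definition ex_aut (reset : bool) : tNW (option bool : finType) :=
  dtNW false (ex_next reset) ex_alpha.

Definition changes (w : word (option bool : finType)) i :=
  (w i == None) || (w i.+1 != w i).

Lemma ex_alpha_next_changes reset t x y :
  ex_alpha (ex_next reset t x) y (ex_next reset (ex_next reset t x) y) ->
  (x == None) || (y != x).
Proof. by case: reset t x y => [] [] [[]|] [[]|]. Qed.

Lemma changes_ex_alpha reset t x y : (x == None) || (y != x) ->
  ex_alpha t x (ex_next reset t x) ||
  ex_alpha (ex_next reset t x) y (ex_next reset (ex_next reset t x) y).
Proof. by case: reset t x y => [] [] [[]|] [[]|]. Qed.

Lemma lang_ex_aut c reset w : lang c (ex_aut reset) w <-> acc_seq c (changes w).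
Proof.
apply: iff_trans; first exact: lang_from_dtNW.
rewrite acc_runE.
apply: acc_seq_shift => i; rewrite !dtrajS !is_alpha_dtNW.
- exact: ex_alpha_next_changes.
- exact: changes_ex_alpha.
Qed.

Lemma ex_aut_same_lang c reset reset' : same_lang c (ex_aut reset) (ex_aut reset').
Proof. by move=> w; split=> /lang_ex_aut/lang_ex_aut. Qed.

Lemma ex_aut_na_loop reset (q q' : bool) : @na_edge _ (ex_aut reset) q q' -> q' = q.
Proof.
by case/existsP=> s; rewrite !inE => /andP[/eqP-> /norP[_ /negPn/eqP <-]].
Qed.

Lemma ex_aut_nice c reset : nice c (ex_aut reset).
Proof.
split; last split; last split; last split.
- by case; [exists [:: Some true]; apply/bigcupP; exists false | exists [::]];
    rewrite !inE.
- exact: GFG_from_dtNW.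
- exact/sem_det_of_det/deterministic_dtNW.
- exact/safe_det_of_det/deterministic_dtNW.
- exact/normal_of_na_loops/ex_aut_na_loop.
Qed.

Lemma same_lang_ex_aut_card_gt1 c reset (B : tNW (option bool : finType)) :
  deterministic B -> same_lang c B (ex_aut reset) -> 1 < #|st B|.
Proof.
move=> detB eqL; rewrite ltnNge; apply/negP => B1.
pose p s := alpha B (q0 B) s (q0 B).
have L w : acc_seq c (fun i => p (w i)) <-> acc_seq c (changes w).
  by split=> [/(lang_one_state detB c B1)/eqL/lang_ex_aut
             |/lang_ex_aut/eqL/(lang_one_state detB c B1)].
have L_cst b : acc_seq c (fun=> p (Some b)) <-> acc_seq c (fun=> false).
  apply: iff_trans (L (fun=> Some b)) _.
  by apply: acc_seq_ext => i; rewrite /changes eqxx.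
have L_alt : acc_seq c (fun i => p (Some (odd i))) <-> acc_seq c (fun=> true).
  apply: iff_trans (L (fun i => Some (odd i))) _; apply: acc_seq_ext => i.
  by rewrite /changes /=; case: (odd i).
case: c eqL L_cst L_alt {L} => _ L_cst L_alt.
- have pN b : ~~ p (Some b) by apply/acc_seq_CoBuchi_cst/L_cst/acc_seq_CoBuchi_cst.
  have /L_alt/acc_seq_CoBuchi_cst // : acc_seq CoBuchi (fun i => p (Some (odd i))).
  by exists 0.
- have alt : acc_seq Buchi (fun i => p (Some (odd i))).
    exact/L_alt/(acc_seq_Buchi_cst true).
  have [i [_ /acc_seq_Buchi_cst/L_cst/acc_seq_Buchi_cst //]] := alt 0.
Qed.

Lemma ex_aut_minimal c reset : minimal_det c (ex_aut reset).
Proof.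
split; first exact: deterministic_dtNW.
by move=> B detB eqL; rewrite card_bool; exact: same_lang_ex_aut_card_gt1 eqL.
Qed.

(* In [ex_aut false] every state has a [#]-loop in alpha; in [ex_aut true]
   the state [true] has none. *)
Lemma ex_aut_not_isomorphic : ~ isomorphic (ex_aut true) (ex_aut false).
Proof. by case=> kappa [_ /(_ true true None) [_]]; rewrite !inE eqxx. Qed.

Theorem mainTheorem12 :
  (exists (Sigma : finType) (D1 D2 : tNW Sigma),
      deterministic D1 /\ deterministic D2 /\
      same_lang CoBuchi D1 D2 /\
      nice CoBuchi D1 /\ nice CoBuchi D2 /\
      minimal_det CoBuchi D1 /\ minimal_det CoBuchi D2 /\
      ~ isomorphic D1 D2) /\
  (exists (Sigma : finType) (D1 D2 : tNW Sigma),
      deterministic D1 /\ deterministic D2 /\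
      same_lang Buchi D1 D2 /\
      nice Buchi D1 /\ nice Buchi D2 /\
      minimal_det Buchi D1 /\ minimal_det Buchi D2 /\
      ~ isomorphic D1 D2).
Proof.
split; exists (option bool : finType), (ex_aut true), (ex_aut false).
all: split; first exact: deterministic_dtNW.
all: split; first exact: deterministic_dtNW.
all: split; first exact: ex_aut_same_lang.
all: split; first exact: ex_aut_nice.
all: split; first exact: ex_aut_nice.
all: split; first exact: ex_aut_minimal.
all: split; first exact: ex_aut_minimal.
all: exact: ex_aut_not_isomorphic.
Qed.
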